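(* Let $G$ be a graph and $B\subseteq V(G)$. Then $B$ is a $1$-edge-leaky forcing set of $G$ if and only if for every $v\in V(G)\setminus B$ there exist forces $x\to v$ and $y\to v$ in $\mathcal{F}(B)$ with $x\neq y$.
   Context: All graphs are finite, simple and undirected. Zero forcing: vertices are blue or white; a blue vertex $u$ with exactly one white neighbor $w$ may force $w$ (color it blue), written $u\to w$. Starting from an initial blue set $B$, a forcing sequence is a chronologically ordered list of forces, each valid at the moment it is performed. $B$ is a zero forcing set if some forcing sequence colors all of $V(G)$ blue; the set of forces of such a sequence is called a forcing process of $B$. $\mathcal{F}(B)$ denotes the set of all forces $u\to v$ that occur in some forcing process of $B$ (one that colors all of $G$ blue). An edge leak is an edge $xy\in E(G)$ across which no force may be performed (neither $x\to y$ nor $y\to x$ is allowed). $B$ is an $\ell$-edge-leaky forcing set if for every set $L$ of at most $\ell$ edge leaks, exhaustively applying the forcing rule from $B$ without ever forcing across an edge of $L$ colors all of $V(G)$ blue. *)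

(* A finite simple graph is a symmetric irreflexive e : rel T
   on a finType T. *)
From mathcomp Require Import all_boot.
Set Implicit Arguments. Unset Strict Implicit. Unset Printing Implicit Defensive.

Section ZeroForcing.
Variable T : finType.
Variable e : rel T.

Definition valid_force (S : {set T}) (u w : T) : bool :=
  [&& u \in S, w \notin S, e u w &
      [forall x, (e u x && (x != w)) ==> (x \in S)]].

Definition leak_set (L : {set {set T}}) : Prop :=
  forall A, A \in L -> exists x y, e x y /\ A = [set x; y].

Definition allowed (L : {set {set T}}) (u w : T) : bool := [set u; w] \notin L.

Fixpoint valid_seqL (L : {set {set T}}) (S : {set T}) (s : seq (T * T)) : bool :=
  if s is (u, w) :: s' then
    [&& valid_force S u w, allowed L u w & valid_seqL L (w |: S) s']
  else true.

Definition final_set (S : {set T}) (s : seq (T * T)) : {set T} :=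
  S :|: [set p.2 | p in s].

Definition forcing_seq (B : {set T}) (s : seq (T * T)) : bool :=
  valid_seqL set0 B s.

Definition zero_forcing_set (B : {set T}) : Prop :=
  exists s, forcing_seq B s /\ final_set B s = [set: T].

Definition in_FB (B : {set T}) (u v : T) : Prop :=
  exists s, [/\ forcing_seq B s, final_set B s = [set: T] & (u, v) \in s].

Definition exhaustive (L : {set {set T}}) (B : {set T}) (s : seq (T * T)) : bool :=
  valid_seqL L B s &&
  [forall u, forall w, ~~ (valid_force (final_set B s) u w && allowed L u w)].

Definition edge_leaky_forcing (l : nat) (B : {set T}) : Prop :=
  forall L : {set {set T}}, leak_set L -> #|L| <= l ->
  forall s, exhaustive L B s -> final_set B s = [set: T].

End ZeroForcing.

From mathcomp Require Import all_boot.
Set Implicit Arguments. Unset Strict Implicit. Unset Printing Implicit Defensive.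

(* (->) With no leak, exhaustive forcing from B colours the whole graph, so a
   vertex v outside B is forced by some x in a complete forcing process.
   Declaring the single leak {x, v}, exhaustive forcing again colours
   everything, so v is forced by some y, and y <> x since the force y -> v
   avoids the leak; a leak-avoiding process is also an ordinary one.

   (<-) Suppose an exhaustive process avoiding a leak set L, |L| <= 1, stalls
   at a blue set F <> V(G).  In any complete forcing process from B, the first
   force whose target lies outside F is performed while the blue set is still
   inside F, hence is a valid force for F; since F is stalled, it crosses a
   leak.  There is only one leak, and the force runs from F to its complement,
   so this first escaping force is the same u -> w in every complete process.
   As a vertex is forced at most once in a process, u is then the only vertex
   that ever forces w, contradicting the hypothesis applied to w. *)

Section ForcingSequences.
Variable T : finType.
Variable e : rel T.
Implicit Types (S F B : {set T}) (L : {set {set T}}) (s : seq (T * T)).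

Definition stalled L F : Prop :=
  forall u w, valid_force e F u w -> ~~ allowed L u w.

Lemma exhaustive_stalled L S s :
  exhaustive e L S s -> stalled L (final_set S s).
Proof.
case/andP=> _ /forallP stuck u w Huw.
by have /forallP/(_ w) := stuck u; rewrite Huw.
Qed.

Lemma mem_final_set S s x :
  (x \in final_set S s) = (x \in S) || (x \in map snd s).
Proof.
rewrite /final_set inE; congr (_ || _).
by apply/imsetP/mapP => [[p Hp ->]|[p Hp ->]]; exists p.
Qed.

Lemma final_set_nil S : final_set S [::] = S.
Proof. by apply/setP => x; rewrite mem_final_set orbF. Qed.

Lemma final_set_cons S u w s :
  final_set S ((u, w) :: s) = final_set (w |: S) s.
Proof.
apply/setP => x; rewrite !mem_final_set /= in_cons !inE.
by case: (x == w); rewrite ?orbT.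
Qed.

Lemma subset_final_set S s : S \subset final_set S s.
Proof. exact: subsetUl. Qed.

Lemma complete_forced S s v :
  final_set S s = [set: T] -> v \notin S -> exists u, (u, v) \in s.
Proof.
move=> Hfull HvS; have : v \in final_set S s by rewrite Hfull inE.
rewrite mem_final_set (negbTE HvS) => /mapP [[u v'] Huv /= ->].
by exists u.
Qed.

(* Exhaustive application of the forcing rule always terminates: force while
   some allowed force exists; the white set shrinks at every step. *)
Lemma exhaustive_exists L S : exists s, exhaustive e L S s.
Proof.
have [n] := ubnP #|~: S|; elim: n S => // n IH S; rewrite ltnS => HS.
have [/existsP [u /existsP [w /andP [Huw Hal]]]|stuck] :=
  boolP [exists u, exists w, valid_force e S u w && allowed L u w].
- have HwS : w \notin S by case/and4P: Huw.
  have [s Hs] : exists s, exhaustive e L (w |: S) s.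
    apply: IH; apply: leq_trans HS; apply: proper_card.
    by rewrite setCU setIC -setDE properD1 // inE.
  exists ((u, w) :: s).
  by move: Hs; rewrite /exhaustive /= final_set_cons Huw Hal.
- exists [::]; rewrite /exhaustive /= final_set_nil.
  apply/forallP => u; apply/forallP => w; apply: contra stuck => Huw.
  by apply/existsP; exists u; apply/existsP; exists w.
Qed.

Lemma valid_seq_fresh L S s p :
  valid_seqL e L S s -> p \in s -> p.2 \notin S.
Proof.
elim: s S => [|[u w] s IH] S //= /and3P [Huw _ Hs].
rewrite in_cons => /orP [/eqP -> /=|Hp]; first by case/and4P: Huw.
by have := IH _ Hs Hp; rewrite in_setU1 negb_or => /andP [].
Qed.

(* A vertex is forced at most once, so its forcer in a sequence is unique. *)
Lemma valid_seq_forcer_uniq L S s u u' w :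
  valid_seqL e L S s -> (u, w) \in s -> (u', w) \in s -> u = u'.
Proof.
elim: s S => [|[a b] s IH] S //= /and3P [_ _ Hs].
rewrite !in_cons => /orP [/eqP [-> Ew]|H1] /orP [/eqP [-> Ew']|H2] //.
- by have := valid_seq_fresh Hs H2; rewrite /= Ew setU11.
- by have := valid_seq_fresh Hs H1; rewrite /= Ew' setU11.
- exact: IH Hs H1 H2.
Qed.

Lemma valid_seq_edge L S s u w :
  valid_seqL e L S s -> (u, w) \in s -> e u w && allowed L u w.
Proof.
elim: s S => [|[a b] s IH] S //= /and3P [Hab Hal Hs].
rewrite in_cons => /orP [/eqP [-> ->]|H]; last exact: IH Hs H.
by case/and4P: Hab => _ _ -> _; rewrite Hal.
Qed.

Lemma valid_seq_forcing L S s : valid_seqL e L S s -> forcing_seq e S s.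
Proof.
rewrite /forcing_seq; elim: s S => [|[a b] s IH] S //= /and3P [Hab _ Hs].
by rewrite Hab (IH _ Hs) /allowed in_set0.
Qed.

Lemma valid_force_mono S F u w :
  S \subset F -> w \notin F -> valid_force e S u w -> valid_force e F u w.
Proof.
move=> /subsetP HSF HwF /and4P [Hu _ He /forallP Hall].
rewrite /valid_force (HSF _ Hu) HwF He /=; apply/forallP => x.
by apply/implyP => Hx; apply: HSF; move/implyP: (Hall x); apply.
Qed.

(* If a sequence starting inside a stalled set F reaches a vertex outside F,
   its first force leaving F is valid for F and therefore crosses a leak. *)
Lemma first_escape L0 L S F s v :
  valid_seqL e L0 S s -> S \subset F -> stalled L F ->
  v \in map snd s -> v \notin F ->
  exists u w, [/\ (u, w) \in s, valid_force e F u w & ~~ allowed L u w].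
Proof.
move=> + + Hstall + HvF; elim: s S => [|[a b] s IH] S //= /and3P [Hab _ Hs] HSF.
rewrite in_cons; have [HbF|HbF] := boolP (b \in F) => Hv.
- have HSF' : b |: S \subset F by rewrite subUset sub1set HbF HSF.
  case/orP: Hv => [/eqP Ev|Hv]; first by rewrite Ev HbF in HvF.
  have [u [w [Huw Hvf Hal]]] := IH _ Hs HSF' Hv.
  by exists u, w; rewrite in_cons Huw orbT.
- have Hvf := valid_force_mono HSF HbF Hab.
  by exists a, b; rewrite in_cons eqxx Hvf (Hstall _ _ Hvf).
Qed.

Lemma leaky_escape_uniq L F u w u' w' :
  #|L| <= 1 -> valid_force e F u w -> valid_force e F u' w' ->
  ~~ allowed L u w -> ~~ allowed L u' w' -> u' = u /\ w' = w.
Proof.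
move=> /card_le1_eqP HL /and4P [HuF HwF _ _] /and4P [Hu'F Hw'F _ _].
rewrite /allowed !negbK => HuwL Huw'L.
have Eq : [set u'; w'] = [set u; w] by apply: HL.
have : u' \in [set u; w] by rewrite -Eq !inE eqxx.
have : w' \in [set u; w] by rewrite -Eq !inE eqxx orbT.
rewrite !inE => /orP [/eqP Ew|/eqP -> //]; last first.
  by case/orP => /eqP Eu //; rewrite Eu (negbTE HwF) in Hu'F.
by rewrite Ew HuF in Hw'F.
Qed.

Lemma leak_set1 x y : e x y -> leak_set e [set [set x; y]].
Proof. by move=> Hxy A; rewrite inE => /eqP ->; exists x, y. Qed.

End ForcingSequences.

Section LeakyForcing.
Variable T : finType.
Variable e : rel T.
Variable B : {set T}.

Lemma leaky_complete L :
  edge_leaky_forcing e 1 B -> leak_set e L -> #|L| <= 1 ->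
  exists s, valid_seqL e L B s /\ final_set B s = [set: T].
Proof.
move=> Hleaky HL HcL; have [s Hs] := exhaustive_exists e L B.
by exists s; split; [case/andP: Hs | apply: Hleaky Hs].
Qed.

Lemma leaky_two_forcers :
  edge_leaky_forcing e 1 B ->
  forall v, v \notin B -> exists x y, x != y /\ in_FB e B x v /\ in_FB e B y v.
Proof.
move=> Hleaky v HvB.
have no_leak : leak_set e (set0 : {set {set T}}) by move=> A; rewrite in_set0.
have no_leak_card : #|(set0 : {set {set T}})| <= 1 by rewrite cards0.
have [s [Hs Hfull]] := leaky_complete Hleaky no_leak no_leak_card.
have [x Hxv] := complete_forced Hfull HvB.
have /andP [Hxv_edge _] := valid_seq_edge Hs Hxv.
have [s' [Hs' Hfull']] :=
  leaky_complete Hleaky (leak_set1 Hxv_edge) (eq_leq (cards1 _)).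
have [y Hyv] := complete_forced Hfull' HvB.
have /andP [_ Hyv_allowed] := valid_seq_edge Hs' Hyv.
exists x, y; split; last split.
- apply: contraNneq Hyv_allowed => <-.
  by rewrite /allowed inE eqxx.
- by exists s; split => //; apply: valid_seq_forcing Hs.
- by exists s'; split => //; apply: valid_seq_forcing Hs'.
Qed.

(* Backward direction: a stalled exhaustive process under one leak would make
   the escaping force u -> w the only force into w. *)
Lemma two_forcers_leaky :
  (forall v, v \notin B -> exists x y, x != y /\ in_FB e B x v /\ in_FB e B y v) ->
  edge_leaky_forcing e 1 B.
Proof.
move=> Htwo L _ HcL s Hs; set F := final_set B s.
apply/setP => v; rewrite in_setT; apply/idP/contraT => HvF.
have Hstall : stalled e L F := exhaustive_stalled Hs.
have HBF : B \subset F := subset_final_set B s.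
have outside_B z : z \notin F -> z \notin B.
  by apply: contra => /(subsetP HBF).
(* every complete forcing process leaves F by crossing the leak *)
have escape s1 z : forcing_seq e B s1 -> final_set B s1 = [set: T] ->
    z \notin F ->
    exists u w, [/\ (u, w) \in s1, valid_force e F u w & ~~ allowed L u w].
  move=> Hs1 Hf1 HzF; have [x Hxz] := complete_forced Hf1 (outside_B _ HzF).
  by apply: first_escape Hs1 HBF Hstall _ HzF; apply/mapP; exists (x, z).
have [_ [_ [_ [[s1 [Hs1 Hf1 _]] _]]]] := Htwo v (outside_B _ HvF).
have [u [w [_ Huw Hnal]]] := escape s1 v Hs1 Hf1 HvF.
have HwF : w \notin F by case/and4P: Huw.
(* hence u is the only vertex that ever forces w *)
have only_u z : in_FB e B z w -> z = u.
  case=> s2 [Hs2 Hf2 Hzw].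
  have [u' [w' [Hu'w' Hvf' Hnal']]] := escape s2 w Hs2 Hf2 HwF.
  have [Eu Ew] := leaky_escape_uniq HcL Huw Hvf' Hnal Hnal'.
  by rewrite Eu Ew in Hu'w'; apply: valid_seq_forcer_uniq Hs2 Hzw Hu'w'.
have [x' [y' [Hxy [Hx' Hy']]]] := Htwo w (outside_B _ HwF).
by rewrite (only_u _ Hx') (only_u _ Hy') eqxx in Hxy.
Qed.

End LeakyForcing.

Theorem theorem2p1 (T : finType) (e : rel T)
  (e_sym : symmetric e) (e_irr : irreflexive e) (B : {set T}) :
  edge_leaky_forcing e 1 B <->
  (forall v, v \notin B ->
     exists x y, x != y /\ in_FB e B x v /\ in_FB e B y v).
Proof.
split; [exact: leaky_two_forcers | exact: two_forcers_leaky].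
Qed.
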